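(* Let $d,N\in\mathbb{N}$ and $k=2$. Every $\mathbf{x}=(\mathbf{x}_1,\dots,\mathbf{x}_N)\in\mathcal{G}_{d,2}^N$ satisfies $$\mathsf{bary}(\mathbf{x})=1\oplus\Big(\frac1N\sum_{i=1}^N\mathbf{x}_i^{(1)}\Big)\oplus\Big(\frac1N\sum_{i=1}^N\mathbf{x}_i^{(2)}-\frac1{2N}\sum_{i=1}^N\mathbf{x}_i^{(1)}\otimes\mathbf{x}_i^{(1)}+\frac1{2N^2}\sum_{i_1=1}^N\sum_{i_2=1}^N\mathbf{x}_{i_1}^{(1)}\otimes\mathbf{x}_{i_2}^{(1)}\Big).$$
   Context: $T_{d,2}=\mathbb{R}\oplus\mathbb{R}^d\oplus\mathbb{R}^{d\times d}$ with elements $\mathbf{z}=\mathbf{z}^{(0)}\oplus\mathbf{z}^{(1)}\oplus\mathbf{z}^{(2)}$ and product given bilinearly by the tensor (outer) product of levels, truncated (products landing in level $>2$ are $0$); $\mathbf{a}\otimes\mathbf{b}$ for vectors is the matrix $(a_ib_j)$. $\mathfrak{g}_{d,2}$ is the smallest Lie subalgebra (commutator bracket) of $T_{d,2}$ containing $e_1,\dots,e_d\in\mathbb{R}^d$; $\exp(\mathbf{z})=\sum_{\ell=0}^2\mathbf{z}^{\otimes\ell}/\ell!$; $\mathcal{G}_{d,2}=\exp(\mathfrak{g}_{d,2})$, a group with $\log=\exp^{-1}$, $\log(\mathbf{s})=\sum_{\ell\ge1}\frac{(-1)^{\ell+1}}{\ell}(\mathbf{s}-1)^{\otimes\ell}$.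 For $\mathbf{x}\in\mathcal{G}_{d,2}^N$, $\mathsf{bary}(\mathbf{x})$ is the unique $\mathbf{m}\in\mathcal{G}_{d,2}$ with $\sum_{i=1}^N\log(\mathbf{m}^{-1}\mathbf{x}_i)=0$. *)

From HB Require Import structures.
From mathcomp Require Import all_boot all_order all_algebra.
From mathcomp Require Import reals.
Set Implicit Arguments. Unset Strict Implicit. Unset Printing Implicit Defensive.
Import Order.TTheory GRing.Theory Num.Theory.
Local Open Scope ring_scope.

Section Tensor.
Variables (R : realType) (d : nat).

Record T2 := mkT2 { lvl0 : R; lvl1 : 'cV[R]_d; lvl2 : 'M[R]_d }.

Definition tens (a b : 'cV[R]_d) : 'M[R]_d := \matrix_(i, j) (a i 0 * b j 0).

Definition tzero : T2 := mkT2 0 0 0.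
Definition tone : T2 := mkT2 1 0 0.
Definition tadd (a b : T2) : T2 :=
  mkT2 (lvl0 a + lvl0 b) (lvl1 a + lvl1 b) (lvl2 a + lvl2 b).
Definition tscale (c : R) (a : T2) : T2 :=
  mkT2 (c * lvl0 a) (c *: lvl1 a) (c *: lvl2 a).
Definition topp (a : T2) : T2 := tscale (-1) a.
Definition tsub (a b : T2) : T2 := tadd a (topp b).
Definition tmul (a b : T2) : T2 :=
  mkT2 (lvl0 a * lvl0 b)
       (lvl0 a *: lvl1 b + lvl0 b *: lvl1 a)
       (lvl0 a *: lvl2 b + lvl0 b *: lvl2 a + tens (lvl1 a) (lvl1 b)).
Definition tbracket (a b : T2) : T2 := tsub (tmul a b) (tmul b a).

Fixpoint tpow (a : T2) (l : nat) : T2 :=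
  if l is l'.+1 then tmul a (tpow a l') else tone.

Definition tbasis (i : 'I_d) : T2 := mkT2 0 (delta_mx i 0) 0.

(* g_{d,2}: smallest Lie subalgebra (subspace closed under the commutator
   bracket) of T_{d,2} containing e_1, ..., e_d *)
Definition in_lie (z : T2) : Prop :=
  forall S : T2 -> Prop,
    S tzero ->
    (forall a b, S a -> S b -> S (tadd a b)) ->
    (forall c a, S a -> S (tscale c a)) ->
    (forall a b, S a -> S b -> S (tbracket a b)) ->
    (forall i, S (tbasis i)) ->
    S z.

Definition texp (z : T2) : T2 :=
  \big[tadd/tzero]_(l < 3) tscale ((l`!)%:R^-1) (tpow z l).

Definition in_group (s : T2) : Prop := exists z, in_lie z /\ s = texp z.

(* log(s) = sum_{l>=1} (-1)^{l+1}/l (s-1)^{(x) l}; for s with s^(0) = 1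
   (in particular on G_{d,2}) all terms with l >= 3 vanish, so the sum is
   truncated at l = 2. *)
Definition tlog (s : T2) : T2 :=
  \big[tadd/tzero]_(1 <= l < 3)
     tscale ((-1) ^+ l.+1 / l%:R) (tpow (tsub s tone) l).

(* inverse in the truncated tensor algebra (for lvl0 a <> 0):
   a^{-1} = a0^{-1} (1 - u + u^{(x)2}), u = a/a0 - 1 *)
Definition tinv (a : T2) : T2 :=
  let u := tsub (tscale (lvl0 a)^-1 a) tone in
  tscale (lvl0 a)^-1 (tadd (tsub tone u) (tmul u u)).

Definition tsum (N : nat) (F : 'I_N -> T2) : T2 := \big[tadd/tzero]_(i < N) F i.

Definition bary_eq (N : nat) (x : 'I_N -> T2) (m : T2) : Prop :=
  in_group m /\ tsum (fun i => tlog (tmul (tinv m) (x i))) = tzero.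

End Tensor.

(* In step 2 the Baker-Campbell-Hausdorff formula reads
   log(m^-1 x) = log x - log m + [log x, log m]/2.  Summed over the x_i, the
   first level of the barycenter equation forces level 1 of m to be the mean
   of the x_i^(1); then the first levels of sum_i log x_i and log m are
   proportional, the bracket term vanishes, and the equation becomes
   log m = (1/N) sum_i log x_i.  This mean lies in the Lie algebra (a linear
   subspace), so its exponential is the unique solution in G, and expanding
   exp gives the stated formula. *)

From mathcomp Require Import all_boot all_order all_algebra.
From mathcomp Require Import reals ring.
Set Implicit Arguments. Unset Strict Implicit. Unset Printing Implicit Defensive.
Import Order.TTheory GRing.Theory Num.Theory.
Local Open Scope ring_scope.

Section TruncatedTensorAlgebra.
Variables (R : realType) (d : nat).
Implicit Types (a b : 'cV[R]_d) (y z m s : T2 R d).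

Lemma T2_ext y z :
  lvl0 y = lvl0 z -> lvl1 y = lvl1 z -> lvl2 y = lvl2 z -> y = z.
Proof. by case: y; case: z => /= ??? ??? -> -> ->. Qed.

Lemma lvl0_tsum N (F : 'I_N -> T2 R d) : lvl0 (tsum F) = \sum_i lvl0 (F i).
Proof. by rewrite /tsum; elim/big_rec2: _ => //= i a b _ ->. Qed.

Lemma lvl1_tsum N (F : 'I_N -> T2 R d) : lvl1 (tsum F) = \sum_i lvl1 (F i).
Proof. by rewrite /tsum; elim/big_rec2: _ => //= i a b _ ->. Qed.

Lemma lvl2_tsum N (F : 'I_N -> T2 R d) : lvl2 (tsum F) = \sum_i lvl2 (F i).
Proof. by rewrite /tsum; elim/big_rec2: _ => //= i a b _ ->. Qed.

Lemma tensZl c a b : tens (c *: a) b = c *: tens a b.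
Proof. by apply/matrixP=> i j; rewrite !mxE mulrA. Qed.

Lemma tensZr c a b : tens a (c *: b) = c *: tens a b.
Proof. by apply/matrixP=> i j; rewrite !mxE mulrCA. Qed.

Lemma tens_suml I (r : seq I) (P : pred I) (F : I -> 'cV[R]_d) b :
  tens (\sum_(i <- r | P i) F i) b = \sum_(i <- r | P i) tens (F i) b.
Proof.
apply/matrixP=> i j; rewrite !mxE !summxE mulr_suml.
by apply: eq_bigr => k _; rewrite !mxE.
Qed.

Lemma tens_sumr I (r : seq I) (P : pred I) a (F : I -> 'cV[R]_d) :
  tens a (\sum_(i <- r | P i) F i) = \sum_(i <- r | P i) tens a (F i).
Proof.
apply/matrixP=> i j; rewrite !mxE !summxE mulr_sumr.
by apply: eq_bigr => k _; rewrite !mxE.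
Qed.

Lemma lvl0_tbracket y z : lvl0 (tbracket y z) = 0.
Proof. by rewrite /tbracket /=; ring. Qed.

Lemma texpE z : lvl0 z = 0 ->
  texp z = mkT2 1 (lvl1 z) (lvl2 z + 2^-1 *: tens (lvl1 z) (lvl1 z)).
Proof.
move=> z0; rewrite /texp !big_ord_recl big_ord0.
by apply: T2_ext => /=; rewrite z0 /bump /= !addn0 !factS !fact0;
  try apply/matrixP=> i j; rewrite ?mxE; field.
Qed.

Lemma tlogE s : lvl0 s = 1 ->
  tlog s = mkT2 0 (lvl1 s) (lvl2 s - 2^-1 *: tens (lvl1 s) (lvl1 s)).
Proof.
move=> s0; rewrite /tlog big_ltn // big_ltn // big_geq //.
by apply: T2_ext => /=; rewrite s0; try apply/matrixP=> i j; rewrite ?mxE; field.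
Qed.

Lemma tinvE m : lvl0 m = 1 ->
  tinv m = mkT2 1 (- lvl1 m) (- lvl2 m + tens (lvl1 m) (lvl1 m)).
Proof.
move=> m0; apply: T2_ext; rewrite /= m0 invr1;
  try apply/matrixP=> i j; rewrite ?mxE; ring.
Qed.

Lemma texpK z : lvl0 z = 0 -> tlog (texp z) = z.
Proof.
move=> z0; rewrite texpE // tlogE //.
by apply: T2_ext => //=; rewrite addrK.
Qed.

Lemma tlogK s : lvl0 s = 1 -> texp (tlog s) = s.
Proof.
move=> s0; rewrite tlogE // texpE //.
by apply: T2_ext => //=; rewrite subrK.
Qed.

Lemma lvl0_tlog s : lvl0 s = 1 -> lvl0 (tlog s) = 0.
Proof. by move=> s0; rewrite tlogE. Qed.

Lemma lvl1_tlog s : lvl0 s = 1 -> lvl1 (tlog s) = lvl1 s.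
Proof. by move=> s0; rewrite tlogE. Qed.

Lemma tlog_mul_tinv m y : lvl0 m = 1 -> lvl0 y = 1 ->
  tlog (tmul (tinv m) y) =
  tadd (tsub (tlog y) (tlog m)) (tscale 2^-1 (tbracket (tlog y) (tlog m))).
Proof.
move=> m0 y0; rewrite tinvE // !tlogE //; last by rewrite /= y0 mulr1.
by apply: T2_ext; rewrite /tbracket /= ?y0;
  try apply/matrixP=> i j; rewrite ?mxE; field.
Qed.

Lemma in_lie_tzero : in_lie (tzero R d).
Proof. by move=> S. Qed.

Lemma in_lie_tadd y z : in_lie y -> in_lie z -> in_lie (tadd y z).
Proof.
move=> Hy Hz S S0 SD SZ SB Se.
by apply: (SD); [apply: Hy | apply: Hz].
Qed.

Lemma in_lie_tscale c z : in_lie z -> in_lie (tscale c z).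
Proof. by move=> Hz S S0 SD SZ SB Se; apply: (SZ); apply: Hz. Qed.

Lemma in_lie_tsum N (F : 'I_N -> T2 R d) :
  (forall i, in_lie (F i)) -> in_lie (tsum F).
Proof.
move=> HF; rewrite /tsum.
by apply: big_ind => [|y z|i _]; [exact: in_lie_tzero | exact: in_lie_tadd | exact: HF].
Qed.

Lemma in_lie_lvl0 z : in_lie z -> lvl0 z = 0.
Proof.
move=> Hz; apply: (Hz (fun z => lvl0 z = 0)) => //= [a b -> -> | c a -> | a b _ _].
- by rewrite addr0.
- by rewrite mulr0.
- exact: lvl0_tbracket.
Qed.

Lemma in_group_lvl0 s : in_group s -> lvl0 s = 1.
Proof. by case=> z [/in_lie_lvl0 z0 ->]; rewrite texpE. Qed.

Lemma in_group_tlog s : in_group s -> in_lie (tlog s).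
Proof. by case=> z [Hz ->]; rewrite texpK // in_lie_lvl0. Qed.

Section Barycenter.
Variables (N : nat) (x : 'I_N -> T2 R d).
Hypothesis x0 : forall i, lvl0 (x i) = 1.

Local Notation logsum := (tsum (fun i => tlog (x i))).

Lemma lvl0_logsum : lvl0 logsum = 0.
Proof. by rewrite lvl0_tsum big1 // => i _; rewrite lvl0_tlog. Qed.

Lemma lvl1_logsum : lvl1 logsum = \sum_i lvl1 (x i).
Proof. by rewrite lvl1_tsum; apply: eq_bigr => i _; rewrite lvl1_tlog. Qed.

Lemma tsum_tlog_mul_tinv m : lvl0 m = 1 ->
  tsum (fun i => tlog (tmul (tinv m) (x i))) =
  tadd (tsub logsum (tscale N%:R (tlog m)))
       (tscale 2^-1 (tbracket logsum (tlog m))).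
Proof.
move=> m0; set lm := tlog m.
have lm0 : lvl0 lm = 0 by rewrite lvl0_tlog.
have lm1 : lvl1 lm = lvl1 m by rewrite lvl1_tlog.
have mx0 i : lvl0 (tmul (tinv m) (x i)) = 1 by rewrite tinvE //= x0 mulr1.
have term1 i : lvl1 (tlog (tmul (tinv m) (x i))) = lvl1 (x i) - lvl1 m.
  by rewrite lvl1_tlog // tinvE //= x0 !scale1r.
have term2 i : lvl2 (tlog (tmul (tinv m) (x i))) =
    lvl2 (tlog (x i)) - lvl2 lm
    + 2^-1 *: (tens (lvl1 (x i)) (lvl1 m) - tens (lvl1 m) (lvl1 (x i))).
  rewrite tlog_mul_tinv //= lm0 !lvl0_tlog // lm1 lvl1_tlog //.
  by apply/matrixP=> k l; rewrite !mxE; ring.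
apply: T2_ext; rewrite /= ?lvl0_logsum ?lvl1_logsum ?lm0 ?lm1.
- by rewrite lvl0_tsum big1 => [|i _]; rewrite ?lvl0_tlog //; ring.
- rewrite lvl1_tsum (eq_bigr _ (fun i _ => term1 i)) sumrB sumr_const card_ord.
  by rewrite !scale0r !(addr0, scaler0) scaleN1r scaler_nat.
- rewrite !lvl2_tsum (eq_bigr _ (fun i _ => term2 i)) big_split /= sumrB.
  rewrite sumr_const card_ord -scaler_sumr sumrB -tens_suml -tens_sumr.
  by rewrite !scale0r !add0r !scaleN1r scaler_nat.
Qed.

Hypothesis N_gt0 : (0 < N)%N.

Definition log_mean := tscale N%:R^-1 logsum.

Lemma tsum_tlog_mul_tinv_eq0 m : lvl0 m = 1 ->
  tsum (fun i => tlog (tmul (tinv m) (x i))) = tzero R d <->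
  tlog m = log_mean.
Proof.
move=> m0; have N0 : N%:R != 0 :> R by rewrite pnatr_eq0 -lt0n.
have lm0 : lvl0 (tlog m) = 0 by rewrite lvl0_tlog.
rewrite tsum_tlog_mul_tinv //; split => [h | ->].
- have /= := congr1 (@lvl1 R d) h; rewrite lvl0_logsum lm0.
  rewrite !scale0r !(addr0, scaler0) scaleN1r => /subr0_eq e1.
  have /= := congr1 (@lvl2 R d) h; rewrite lvl0_logsum lm0 e1 tensZl tensZr.
  rewrite !scale0r !add0r !scaleN1r subrr scaler0 addr0 => /subr0_eq e2.
  by apply: T2_ext; rewrite /= ?lm0 ?lvl0_logsum ?mulr0 // ?e1 ?e2 scalerA mulVf // scale1r.
- by apply: T2_ext; rewrite /= lvl0_logsum;
    try apply/matrixP=> i j; rewrite ?mxE; field.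
Qed.

Lemma texp_log_mean :
  texp log_mean = mkT2 1
     ((N%:R)^-1 *: \sum_(i < N) lvl1 (x i))
     ((N%:R)^-1 *: \sum_(i < N) lvl2 (x i)
      - ((2 * N)%:R)^-1 *: \sum_(i < N) tens (lvl1 (x i)) (lvl1 (x i))
      + ((2 * N ^ 2)%:R)^-1 *:
          \sum_(i1 < N) \sum_(i2 < N) tens (lvl1 (x i1)) (lvl1 (x i2))).
Proof.
have N0 : N%:R != 0 :> R by rewrite pnatr_eq0 -lt0n.
rewrite texpE; last by rewrite /= lvl0_logsum mulr0.
have sum_tens : \sum_(i1 < N) \sum_(i2 < N) tens (lvl1 (x i1)) (lvl1 (x i2)) =
    tens (\sum_i lvl1 (x i)) (\sum_i lvl1 (x i)).
  by rewrite tens_suml; apply: eq_bigr => i _; rewrite tens_sumr.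
apply: T2_ext; rewrite /= ?lvl1_logsum // lvl2_tsum sum_tens tensZl tensZr.
rewrite (eq_bigr (fun i => lvl2 (x i) - 2^-1 *: tens (lvl1 (x i)) (lvl1 (x i))));
  last by move=> i _; rewrite tlogE.
rewrite sumrB -scaler_sumr !natrM.
by apply/matrixP=> i j; rewrite !mxE; field.
Qed.

End Barycenter.

End TruncatedTensorAlgebra.

Theorem theorem4p11 (R : realType) (d N : nat) (HN : (0 < N)%N)
  (x : 'I_N -> T2 R d) (Hx : forall i, in_group (x i)) :
  let m := mkT2 1
     ((N%:R)^-1 *: \sum_(i < N) lvl1 (x i))
     ((N%:R)^-1 *: \sum_(i < N) lvl2 (x i)
      - ((2 * N)%:R)^-1 *: \sum_(i < N) tens (lvl1 (x i)) (lvl1 (x i))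
      + ((2 * N ^ 2)%:R)^-1 *:
          \sum_(i1 < N) \sum_(i2 < N) tens (lvl1 (x i1)) (lvl1 (x i2))) in
  bary_eq x m /\ (forall m', bary_eq x m' -> m' = m).
Proof.
move=> m.
have x0 i : lvl0 (x i) = 1 := in_group_lvl0 (Hx i).
have lie_mean : in_lie (log_mean x).
  by apply: in_lie_tscale; apply: in_lie_tsum => i; apply: in_group_tlog.
have mean0 := in_lie_lvl0 lie_mean.
have m0 : lvl0 (texp (log_mean x)) = 1 by rewrite texpE.
have -> : m = texp (log_mean x) by rewrite texp_log_mean.
split; first split.
- by exists (log_mean x).
- by apply/(tsum_tlog_mul_tinv_eq0 x0 HN m0); rewrite texpK.
- move=> m' [/in_group_lvl0 m'0 /(tsum_tlog_mul_tinv_eq0 x0 HN m'0) <-].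
  by rewrite tlogK.
Qed.
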